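(* Status injective trees are status unique in trees: if $T$ is a tree whose vertices have pairwise distinct status values, and $T'$ is any tree with $\sigma(T')=\sigma(T)$, then $T'$ is isomorphic to $T$.
   Context: All graphs are finite, simple and connected. For a connected graph $G=(V,E)$ and $v\in V$, the status of $v$ is $s(v)=\sum_{u\in V} d(v,u)$, where $d$ is the shortest-path distance. The status sequence $\sigma(G)$ is the list of the statuses of all vertices of $G$ arranged in nondecreasing order. A connected graph is status injective if the statuses of its vertices are pairwise distinct. *)

From mathcomp Require Import all_boot.
Set Implicit Arguments. Unset Strict Implicit. Unset Printing Implicit Defensive.

Section Graphs.
Variable V : finType.
Implicit Types (e : rel V).

Definition simple_graph e := symmetric e /\ irreflexive e.

Definition connected_graph e := forall x y : V, connect e x y.

Definition acyclic e :=
  forall c : seq V, uniq c -> 3 <= size c -> ~~ cycle e c.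

Definition is_tree e := [/\ simple_graph e, connected_graph e & acyclic e].

Definition walk_of_length e (x y : V) (n : nat) : bool :=
  [exists p : n.-tuple V, path e x p && (last x p == y)].

(* shortest-path distance: least n with a walk of length n from x to y
   (in a connected graph such an n is < #|V|) *)
Definition dist e (x y : V) : nat :=
  find (walk_of_length e x y) (iota 0 #|V|).

Definition status e (v : V) : nat := \sum_(u : V) dist e v u.

Definition status_seq e : seq nat := sort leq [seq status e v | v <- enum V].

Definition status_injective e := injective (status e).

End Graphs.

Definition isomorphic (V W : finType) (e : rel V) (f : rel W) : Prop :=
  exists phi : V -> W, bijective phi /\ forall x y, f (phi x) (phi y) = e x y.

From mathcomp Require Import all_boot zify.
Set Implicit Arguments. Unset Strict Implicit. Unset Printing Implicit Defensive.

(* In a tree on n vertices, an edge xy changes the status by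
   s(y) - s(x) = 2 n_x - n, where n_x is the number of vertices closer to x
   than to y.  If the statuses are distinct, every vertex but the one of
   least status has exactly one neighbour of smaller status, and statuses
   increase along paths leading away from it.  Taking y to be the lower
   neighbour of x, the branch sizes n_x obey the recursion n_x = 1 + sum of n_c over the neighbours c of larger status,
   and these neighbours are recognised by their status alone through the
   identity above.  Hence the status sequence determines all branch sizes and
   then all edges, so two trees sharing it are isomorphic via the bijection
   matching equal statuses. *)

Lemma sum_mem_card (T : finType) (A : {set T}) : \sum_x (x \in A : nat) = #|A|.
Proof. by rewrite -sum1_card [RHS]big_mkcond; apply: eq_bigr => x _; case: (x \in A). Qed.

Lemma card_above_ltn (T : finType) (g : T -> nat) x v :
  g x < g v -> #|[set z | g v < g z]| < #|[set z | g x < g z]|.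
Proof.
move=> gxv; apply: proper_card; apply/properP; split.
  by apply/subsetP => z; rewrite !inE; apply: ltn_trans.
by exists v; rewrite !inE ?ltnn.
Qed.

Lemma perm_eq_map_bij (T U : finType) (g : T -> nat) (h : U -> nat) :
  injective g -> perm_eq (map h (enum U)) (map g (enum T)) ->
  exists2 phi : U -> T, bijective phi & forall x, g (phi x) = h x.
Proof.
move=> ginj hg.
have hinj : injective h.
  apply/injectiveP; rewrite /injectiveb /dinjectiveb (perm_uniq hg).
  by rewrite map_inj_uniq ?enum_uniq.
have img x : exists v, g v == h x.
  have : h x \in map g (enum T) by rewrite -(perm_mem hg) map_f ?mem_enum.
  by case/mapP => v _ ->; exists v.
exists (fun x => xchoose (img x)) => [|x]; last exact/eqP/(xchooseP (img x)).
apply: inj_card_bij => [a b /(congr1 g)|].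
  by rewrite (eqP (xchooseP (img a))) (eqP (xchooseP (img b))) => /hinj.
by rewrite !cardE -(size_map h) -(size_map g) (perm_size hg).
Qed.

Lemma size_status_seq (V : finType) (e : rel V) : size (status_seq e) = #|V|.
Proof. by rewrite size_sort size_map -cardE. Qed.

Section Distance.
Variables (V : finType) (e : rel V).
Local Notation d := (dist e).

Lemma walk_of_lengthP x y k :
  reflect (exists p : seq V, [/\ size p = k, path e x p & last x p = y])
          (walk_of_length e x y k).
Proof.
apply: (iffP existsP) => [[p /andP[ep /eqP lp]] | [p [sp ep lp]]].
  by exists (val p); rewrite size_tuple.
have sp' : size p == k by rewrite sp.
by exists (Tuple sp'); rewrite /= ep lp eqxx.
Qed.

Lemma dist_le_walk x y k : walk_of_length e x y k -> d x y <= k.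
Proof.
move=> wk; rewrite /dist; case: (ltnP k #|V|) => [kV|Vk].
  by rewrite leqNgt; apply/negP => /(before_find 0); rewrite nth_iota // add0n wk.
by apply: leq_trans (find_size _ _) _; rewrite size_iota.
Qed.

Lemma dist_xx x : d x x = 0.
Proof.
by apply/eqP; rewrite -leqn0; apply: dist_le_walk; apply/walk_of_lengthP; exists [::].
Qed.

Lemma dist0_eq x y : d x y = 0 -> x = y.
Proof.
move=> dxy; have V0 : 0 < #|V| by apply/card_gt0P; exists x.
have : has (walk_of_length e x y) (iota 0 #|V|).
  by rewrite has_find -/(dist e x y) dxy size_iota.
move=> /(nth_find 0); rewrite -/(dist e x y) dxy nth_iota //.
by case/walk_of_lengthP => -[[_ _ <-] | ? ? []].
Qed.

Hypothesis conn_e : connected_graph e.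

Lemma walk_of_length_dist x y : walk_of_length e x y (d x y).
Proof.
have hasw : has (walk_of_length e x y) (iota 0 #|V|).
  have /connectP [p ep ->] := conn_e x y; case: (shortenP ep) => q eq' uq _.
  apply/hasP; exists (size q); last by apply/walk_of_lengthP; exists q.
  by rewrite mem_iota /= add0n -[(size q).+1]/(size (x :: q)) -(card_uniqP uq) max_card.
by have := nth_find 0 hasw; rewrite nth_iota // -{2}(size_iota 0 #|V|) -has_find.
Qed.

Lemma dist_edge_le u v w : e u v -> d u w <= (d v w).+1.
Proof.
move=> euv; apply: dist_le_walk.
have /walk_of_lengthP [p [sp ep lp]] := walk_of_length_dist v w.
by apply/walk_of_lengthP; exists (v :: p); rewrite /= sp euv ep lp.
Qed.

Lemma dist_succ_step x z k : d x z = k.+1 -> exists2 y, e x y & d y z = k.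
Proof.
move=> dxz; have /walk_of_lengthP [p [sp ep lp]] := walk_of_length_dist x z.
move: sp ep lp; rewrite dxz; case: p => [//|y p] /= [sp] /andP[exy ep] lp.
exists y => //; apply/eqP; rewrite eqn_leq.
have -> : d y z <= k by apply: dist_le_walk; apply/walk_of_lengthP; exists p.
by have := dist_edge_le z exy; rewrite dxz.
Qed.

End Distance.

Definition closer (V : finType) (e : rel V) (x y : V) : {set V} :=
  [set w | dist e x w < dist e y w].

(* For the vertex v of status a in a status-injective tree with status
   sequence S, branch_size S k a is the number of vertices closer to v than to
   its neighbour of smaller status (k is fuel): its children are the vertices
   of status b > a with a + n = b + 2 branch_size b.  Likewise lower_adj S a b
   says that b is the status of the lower neighbour of that vertex. *)
Fixpoint branch_size (S : seq nat) (k a : nat) : nat :=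
  if k is k'.+1 then
    (\sum_(b <- S | (a < b) && (a + size S == b + (branch_size S k' b).*2))
       branch_size S k' b).+1
  else 1.

Definition lower_adj (S : seq nat) (a b : nat) : bool :=
  (b < a) && (b + size S == a + (branch_size S (size S) a).*2).

Definition status_adj (S : seq nat) (a b : nat) : bool :=
  lower_adj S a b || lower_adj S b a.

Section Tree.
Variables (V : finType) (e : rel V).
Hypotheses (sym_e : symmetric e) (irr_e : irreflexive e).
Hypotheses (conn_e : connected_graph e) (acyc_e : acyclic e).
Local Notation d := (dist e).

Lemma equidistant_path k a b w : a != b -> d a w = k -> d b w = k ->
  exists p, [/\ path e a p, last a p = b, uniq (a :: p), 3 <= size (a :: p)
             & {in a :: p, forall v, d v w <= k}].
Proof.
elim: k a b => [|k IH] a b ab da db.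
  by move: ab; rewrite (dist0_eq da) (dist0_eq db) eqxx.
have [a' ea da'] := dist_succ_step conn_e da.
have [b' eb db'] := dist_succ_step conn_e db.
have a'_notin p :
    {in a' :: p, forall v, d v w <= k} -> (a \notin a' :: p) && (b \notin a' :: p).
  by move=> le_k; apply/andP; split; apply/negP => /le_k; rewrite ?da ?db ltnn.
case: (eqVneq a' b') eb db' => [<- eb _ | ab' eb db'].
  exists [:: a'; b]; split => //=; first by rewrite ea sym_e eb.
    have : (a \notin [:: a']) && (b \notin [:: a']).
      by apply: a'_notin => v; rewrite inE => /eqP ->; rewrite da'.
    by rewrite !inE !negb_or ab => /andP[-> ba']; rewrite eq_sym ba'.
  by move=> v; rewrite !inE => /or3P[] /eqP ->; rewrite ?da ?db ?da' ?leqnSn.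
have [p [ep lp up sp le_k]] := IH _ _ ab' da' db'.
have /andP[] := a'_notin p le_k; rewrite !inE !negb_or => /andP[aa' ap] /andP[ba' bp].
exists (rcons (a' :: p) b); split.
- by rewrite rcons_path /= ea ep lp sym_e eb.
- by rewrite last_rcons.
- move: up => /= /andP[a'p up].
  rewrite -cats1 cat_uniq /= !inE !mem_cat !inE !negb_or.
  by rewrite aa' ap ab bp a'p up eq_sym ba'.
- by rewrite /= size_rcons; move: sp => /=; lia.
- move=> v; rewrite inE mem_rcons inE => /or3P[/eqP -> | /eqP -> | /le_k /leqW //].
  by rewrite da. by rewrite db.
Qed.

Lemma dist_edge_neq u v w : e u v -> d u w != d v w.
Proof.
move=> euv; apply/eqP => duv.
have uv : u != v by apply: contraTneq euv => ->; rewrite irr_e.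
have [p [ep lp up sp _]] := equidistant_path uv duv (erefl _).
by have := acyc_e up sp; rewrite /= rcons_path ep lp sym_e euv.
Qed.

Lemma dist_edge_succ u v w : e u v -> d u w = (d v w).+1 \/ d v w = (d u w).+1.
Proof.
move=> euv; have := dist_edge_le conn_e w euv.
have := dist_edge_le conn_e w (etrans (sym_e v u) euv).
by have := dist_edge_neq w euv; move/eqP; lia.
Qed.

Lemma mem_closer_edge x c w : e x c -> (w \in closer e c x) = (d x w == (d c w).+1).
Proof. by move=> exc; rewrite inE; case: (dist_edge_succ w exc) => ->; lia. Qed.

Lemma closer_neighbour_uniq x c1 c2 w : e x c1 -> e x c2 ->
  w \in closer e c1 x -> w \in closer e c2 x -> c1 = c2.
Proof.
move=> e1 e2; rewrite !mem_closer_edge // => /eqP d1 /eqP d2.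
case: (eqVneq c1 c2) => // c12; exfalso.
have d12 : d c1 w = d c2 w by apply: succn_inj; rewrite -d1 -d2.
have [p [ep lp up sp le_k]] := equidistant_path c12 (erefl _) (esym d12).
have ux : uniq (x :: c1 :: p).
  by rewrite cons_uniq up andbT; apply/negP => /le_k; rewrite d1 ltnn.
by have := acyc_e ux (leq_trans sp (leqnSn _)); rewrite /= rcons_path e1 ep lp sym_e e2.
Qed.

Lemma closer_neighbour_exists x w : w != x -> exists2 c, e x c & w \in closer e c x.
Proof.
move=> wx; case dxw: (d x w) => [|k]; first by rewrite (dist0_eq dxw) eqxx in wx.
have [c exc dcw] := dist_succ_step conn_e dxw.
by exists c; rewrite // inE dxw dcw.
Qed.

Lemma closer_edgeC u v : e u v -> closer e v u = ~: closer e u v.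
Proof.
by move=> euv; apply/setP => w; rewrite !inE; case: (dist_edge_succ w euv) => ->; lia.
Qed.

Lemma card_closer_edge u v : e u v -> #|closer e u v| + #|closer e v u| = #|V|.
Proof. by move=> euv; rewrite (closer_edgeC euv) cardsC. Qed.

Local Notation s := (status e).

Lemma status_edge x y : e x y -> s y + #|V| = s x + #|closer e x y|.*2.
Proof.
move=> exy.
have balance : s y + #|closer e y x| = s x + #|closer e x y|.
  rewrite -!sum_mem_card /status -!big_split; apply: eq_bigr => w _ /=.
  rewrite !inE; case: (dist_edge_succ w exy) => ->;
    by rewrite ltnSn ltnNge leqnSn addn0 addn1.
by rewrite -(card_closer_edge exy) -addnn; lia.
Qed.

Lemma closer_indicator x y w : e x y ->
  (w \in closer e x y : nat)
  = (w == x) + \sum_(c | e x c && (c != y)) (w \in closer e c x).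
Proof.
move=> exy; case: (eqVneq w x) => [-> | wx].
  rewrite big1 => [|c _]; last by rewrite inE dist_xx.
  rewrite inE dist_xx addn0 lt0n; case: (eqVneq (d y x) 0) => [/dist0_eq yx | //].
  by rewrite yx irr_e in exy.
have [c0 exc0 wc0] := closer_neighbour_exists wx.
have only c : e x c -> (w \in closer e c x) = (c == c0).
  by move=> exc; apply/idP/eqP => [wc | ->] //; apply: closer_neighbour_uniq exc exc0 wc wc0.
have -> : (w \in closer e x y) = (c0 != y).
  by rewrite eq_sym -(only y exy) (closer_edgeC exy) in_setC negbK.
rewrite add0n (eq_bigr (fun c => (c == c0) : nat)) => [|c /andP[exc _]];
  last by rewrite only.
case: (eqVneq c0 y) => [-> | c0y] /=; first by rewrite big1 // => c /andP[_ /negbTE ->].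
by rewrite (bigD1 c0) ?exc0 ?c0y //= eqxx big1 // => c /andP[_ /negbTE ->].
Qed.

Lemma card_closer_rec x y : e x y ->
  #|closer e x y| = (\sum_(c | e x c && (c != y)) #|closer e c x|).+1.
Proof.
move=> exy; rewrite -sum_mem_card.
rewrite (eq_bigr _ (fun w _ => closer_indicator w exy)) big_split /=.
rewrite (bigD1 x) //= eqxx big1 => [|w /negbTE -> //]; rewrite exchange_big /= addn0 add1n.
by congr _.+1; apply: eq_bigr => c _; rewrite sum_mem_card.
Qed.

Lemma card_closer_neighbours x y1 y2 : e x y1 -> e x y2 -> y1 != y2 ->
  #|closer e y1 x| + #|closer e y2 x| <= #|V|.
Proof.
move=> e1 e2 y12; rewrite -cardsUI.
have -> : closer e y1 x :&: closer e y2 x = set0.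
  apply/setP => w; rewrite in_setI in_set0; apply/negbTE/negP => /andP[w1 w2].
  by move: y12; rewrite (closer_neighbour_uniq e1 e2 w1 w2) eqxx.
by rewrite cards0 addn0 max_card.
Qed.

(* By status_edge, closer e y x holds more than half of the vertices when y is
   a neighbour of smaller status, and two such sets are disjoint. *)
Lemma lower_neighbour_uniq x y1 y2 : e x y1 -> e x y2 ->
  s y1 < s x -> s y2 < s x -> y1 = y2.
Proof.
move=> e1 e2 lt1 lt2; case: (eqVneq y1 y2) => // y12; exfalso.
have := card_closer_neighbours e1 e2 y12.
have := status_edge e1; have := status_edge e2.
have := card_closer_edge e1; have := card_closer_edge e2.
rewrite -!addnn; lia.
Qed.

(* Branches shrink when moving away from x, and by status_edge a branch
   holding less than half of the vertices means that the status goes up. *)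
Lemma status_lt_away x y z : e x y -> s x < s y -> z \in closer e y x -> s x < s z.
Proof.
have [k dyz] : exists k, d y z = k by exists (d y z).
elim: k x y dyz => [|k IH] x y dyz exy sxy zC; first by rewrite -(dist0_eq dyz).
have [y2 ey2 dy2] := dist_succ_step conn_e dyz.
have dxz : d x z = k.+2 by move: zC; rewrite mem_closer_edge // dyz => /eqP.
have y2x : y2 != x by apply/eqP => y2x; move: dy2; rewrite y2x dxz; lia.
have eyx : e y x by rewrite sym_e.
have shrink : #|closer e y2 y| < #|closer e y x|.
  by rewrite (card_closer_rec eyx) (bigD1 y2) /= ?ey2 ?y2x // ltnS leq_addr.
have sy2 : s y < s y2.
  have := status_edge eyx; have := status_edge (etrans (sym_e y2 y) ey2).
  by move: sxy shrink; rewrite -!addnn; lia.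
apply: ltn_trans sxy (IH y y2 dy2 ey2 sy2 _).
by rewrite inE dy2 dyz.
Qed.

Hypothesis inj_s : status_injective e.

Lemma exists_lower_neighbour x z : s z < s x -> exists2 y, e x y & s y < s x.
Proof.
move=> szx; have zx : z != x by apply: contraTneq szx => ->; rewrite ltnn.
have [y exy zC] := closer_neighbour_exists zx.
exists y => //; case: (ltngtP (s y) (s x)) => // [sxy | /inj_s yx].
  by have := status_lt_away exy sxy zC; rewrite ltnNge (ltnW szx).
by rewrite yx irr_e in exy.
Qed.

Lemma neighbour_status_gt x y v : e x y -> s y < s x -> e x v -> v != y -> s x < s v.
Proof.
move=> exy syx exv vy; case: (ltngtP (s x) (s v)) => // [svx | /inj_s xv].
  by rewrite (lower_neighbour_uniq exy exv syx svx) eqxx in vy.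
by rewrite xv irr_e in exv.
Qed.

Local Notation S := (status_seq e).

Lemma branch_size_closer k x y : e x y -> s y < s x ->
  #|[set z | s x < s z]| < k -> branch_size S k (s x) = #|closer e x y|.
Proof.
elim: k x y => [//|k IH] x y exy syx above_k /=.
rewrite (card_closer_rec exy); congr _.+1.
have IHv v y' :
    s x < s v -> e v y' -> s y' < s v -> branch_size S k (s v) = #|closer e v y'|.
  move=> xv evy' syv; apply: IH => //.
  by apply: leq_trans (card_above_ltn xv) _; rewrite -ltnS.
have child v : (s x < s v) && (s x + size S == s v + (branch_size S k (s v)).*2)
               = e x v && (v != y).
  case: (ltnP (s x) (s v)) => [xv | vx] /=.
    have [y' evy' syv] := exists_lower_neighbour xv.
    rewrite (IHv v y' xv evy' syv) size_status_seq -(status_edge evy') eqn_add2r.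
    apply/eqP/andP => [/inj_s -> | [exv _]].
      by split; [rewrite sym_e | apply: contraTneq xv => ->; rewrite -leqNgt ltnW].
    by rewrite (lower_neighbour_uniq evy' _ syv xv) // sym_e.
  apply/esym/negbTE/andP => -[exv vy].
  by have := neighbour_status_gt exy syx exv vy; rewrite ltnNge vx.
have sortS : perm_eq S (map s (enum V)) by rewrite perm_sort.
rewrite (perm_big _ sortS) big_map big_enum_cond /=.
apply: eq_big => [v | v child_v]; first exact: child.
have /andP[xv _] := child_v; move: child_v; rewrite child => /andP[exv _].
by apply: IHv => //; rewrite sym_e.
Qed.

Lemma branch_size_full x y : e x y -> s y < s x ->
  branch_size S (size S) (s x) = #|closer e x y|.
Proof.
move=> exy syx; apply: branch_size_closer; rewrite // size_status_seq -cardsT.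
apply: proper_card; apply/properP; split; first exact: subsetT.
by exists x; rewrite !inE ?ltnn.
Qed.

Lemma lower_adjE x y : lower_adj S (s x) (s y) = e x y && (s y < s x).
Proof.
rewrite /lower_adj andbC; case: ltnP => [syx | _]; rewrite ?andbF //= !andbT.
have [y' exy' syx'] := exists_lower_neighbour syx.
rewrite (branch_size_full exy' syx') size_status_seq -(status_edge exy') eqn_add2r.
by apply/eqP/idP => [/inj_s -> // | exy]; rewrite (lower_neighbour_uniq exy' exy syx' syx).
Qed.

Lemma status_adjE x y : e x y = status_adj S (s x) (s y).
Proof.
rewrite /status_adj !lower_adjE (sym_e y x) -andb_orr.
case: ltngtP => [| | /inj_s yx]; rewrite ?orbT ?andbT //.
by rewrite yx irr_e.
Qed.

End Tree.

Unset Implicit Arguments.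

Theorem theorem3p1 (V : finType) (e : rel V) (W : finType) (f : rel W) :
  is_tree e -> status_injective e ->
  is_tree f -> status_seq f = status_seq e ->
  isomorphic f e.
Proof.
move=> [[sym_e irr_e] conn_e acyc_e] inj_e [[sym_f irr_f] conn_f acyc_f] same_seq.
have [phi bij_phi statusE] :
    exists2 phi : W -> V, bijective phi & forall x, status e (phi x) = status f x.
  apply: perm_eq_map_bij inj_e _.
  by rewrite -(perm_sort leq) -/(status_seq f) same_seq perm_sort perm_refl.
have inj_f : status_injective f.
  by move=> a b; rewrite -!statusE => /inj_e /(bij_inj bij_phi).
exists phi; split => // x y.
rewrite (status_adjE sym_f irr_f conn_f acyc_f inj_f).
by rewrite (status_adjE sym_e irr_e conn_e acyc_e inj_e) !statusE same_seq.
Qed.
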